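(* The rational function \[ \psi_{32}(z)=\frac{\frac{1246}{384649}z^3+\frac{2289}{34970}z^2+\frac{119}{269}z+1}{-\frac{4}{327}z^3+\frac{8}{65}z^2-\frac{150}{269}z+1} \] belongs to $\Pi_{3/3,2}$ and satisfies $R(\psi_{32})=x_0\approx 6.778307398$, where $x_0$ is the smallest real root of \[ 43572620x^3-880461561x^2+5950520030x-13451175530=0. \] In particular $R_{3/3,2}>6$.
   Context: A real rational function $\psi$ is always considered in lowest terms, as a smooth function on $\mathbb{R}$ minus its finitely many poles. It is absolutely monotonic at $x\in\mathbb{R}$ if $x$ is not a pole and $\psi^{(k)}(x)\ge 0$ for all integers $k\ge 0$. The radius of absolute monotonicity is $R(\psi)=\sup\big(\{r\in[0,\infty): \psi \text{ is absolutely monotonic at each point of } [-r,0]\}\cup\{0\}\big)\in[0,+\infty]$. For $m,n,p\in\mathbb{N}$, $\Pi_{m/n,p}$ denotes the set of rational functions $\psi=P/Q$ with $P,Q$ real polynomials, $\deg P\le m$, $Q\not\equiv 0$, $\deg Q\le n$, such that $\psi(z)-e^z=O(z^{p+1})$ as $z\to 0$. Finally, $R_{m/n,p}=\sup\{R(\psi):\psi\in\Pi_{m/n,p}\}$. *)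

From Stdlib Require Import Reals Lra List.
Open Scope R_scope.

(* Real polynomials as coefficient lists, lowest degree first. *)
Definition peval (l : list R) (x : R) : R :=
  fold_right (fun c acc => c + x * acc) 0 l.

Definition deg_le (l : list R) (m : nat) : Prop := (length l <= S m)%nat.

Definition poly_nonzero (l : list R) : Prop := exists c, In c l /\ c <> 0.

(* P/Q and P1/Q1 are the same rational function: P*Q1 = P1*Q as polynomials
   (equality of polynomial functions over R = equality of polynomials). *)
Definition rat_equiv (P Q P1 Q1 : list R) : Prop :=
  forall z, peval P z * peval Q1 z = peval P1 z * peval Q z.

(* x is not a pole of the rational function P/Q (taken in lowest terms):
   some representative of the same rational function has nonzero denominator at x. *)
Definition nonpole (P Q : list R) (x : R) : Prop :=
  exists P1 Q1, rat_equiv P Q P1 Q1 /\ peval Q1 x <> 0.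

Definition rat_val (P Q : list R) (x v : R) : Prop :=
  exists P1 Q1, rat_equiv P Q P1 Q1 /\ peval Q1 x <> 0 /\ v = peval P1 x / peval Q1 x.

(* psi = P/Q is absolutely monotonic at x: x is not a pole and all derivatives
   psi^(k)(x) >= 0.  d k is the k-th derivative of psi on the (open) set of non-poles. *)
Definition abs_monotonic_at (P Q : list R) (x : R) : Prop :=
  nonpole P Q x /\
  exists d : nat -> R -> R,
    (forall y, nonpole P Q y -> rat_val P Q y (d O y)) /\
    (forall k y, nonpole P Q y -> derivable_pt_lim (d k) y (d (S k) y)) /\
    (forall k, 0 <= d k x).

(* The set whose supremum is R(psi). *)
Definition radius_set (P Q : list R) (r : R) : Prop :=
  r = 0 \/ (0 <= r /\ forall x, -r <= x <= 0 -> abs_monotonic_at P Q x).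

Definition in_Pi (m n p : nat) (P Q : list R) : Prop :=
  deg_le P m /\ deg_le Q n /\ poly_nonzero Q /\
  exists delta C, 0 < delta /\ 0 <= C /\
    forall z, Rabs z < delta ->
      exists v, rat_val P Q z v /\ Rabs (v - exp z) <= C * Rabs z ^ (S p).

(* R_{m/n,p} > a, i.e. sup { R(psi) : psi in Pi_{m/n,p} } > a, i.e.
   some psi in Pi_{m/n,p} has some r > a in its radius set. *)
Definition Rmnp_gt (m n p : nat) (a : R) : Prop :=
  exists P Q, in_Pi m n p P Q /\ exists r, a < r /\ radius_set P Q r.

Definition P32 : list R :=
  1 :: (119 / 269) :: (2289 / 34970) :: (1246 / 384649) :: nil.
Definition Q32 : list R :=
  1 :: (- (150 / 269)) :: (8 / 65) :: (- (4 / 327)) :: nil.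

Definition cubic32 (x : R) : R :=
  43572620 * x ^ 3 - 880461561 * x ^ 2 + 5950520030 * x - 13451175530.

(** Write ψ = P/Q.  Q has one real root p ≈ 3.714 and complex roots z, z̄, so
    off p we have ψ(y) = c₀ + A/(p - y) + Re(B/(z - y)) with A > 0, and since
    (1/(c - y))' = 1/(c - y)² the derivatives are explicit:
        ψ⁽ᵏ⁾(y) = [k = 0] c₀ + k! Re(A/(p - y)^(k+1) + B/(z - y)^(k+1)).
    On [-x₀, 0], |p - y|² ≤ θ |z - y|² with θ < 1, so for k ≥ 6 the real pole
    dominates and ψ⁽ᵏ⁾ ≥ 0.  For k ≤ 5, the Leibniz rule applied to Qψ = P at
    the root -x₀ of P gives ψ⁽ᵏ⁾(-x₀) ≥ 0, and downward induction with the
    mean value theorem spreads these signs over [-x₀, 0].  For r > x₀,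
    P(-r) < 0 < Q(-r), so ψ(-r) < 0: hence R(ψ) = x₀.  Finally ψ - exp = O(z³). *)

From Stdlib Require Import Reals Lra Lia Psatz.
From Coquelicot Require Import Coquelicot.
Open Scope R_scope.

Definition Pf (y : R) : R := 1 + 119/269*y + 2289/34970*y^2 + 1246/384649*y^3.
Definition P1f (y : R) : R := 119/269 + 2*(2289/34970)*y + 3*(1246/384649)*y^2.
Definition P2f (y : R) : R := 2*(2289/34970) + 6*(1246/384649)*y.
Definition P3f : R := 6*(1246/384649).
Definition Qf (y : R) : R := 1 - 150/269*y + 8/65*y^2 - 4/327*y^3.
Definition Q1f (y : R) : R := - (150/269) + 2*(8/65)*y - 3*(4/327)*y^2.
Definition Q2f (y : R) : R := 2*(8/65) - 6*(4/327)*y.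
Definition Q3f : R := - 6*(4/327).

Lemma peval_P32 y : peval P32 y = Pf y.
Proof. unfold peval, P32, Pf; simpl; ring. Qed.

Lemma peval_Q32 y : peval Q32 y = Qf y.
Proof. unfold peval, Q32, Qf; simpl; ring. Qed.

Lemma cubic32_eq x : cubic32 x = - 13451175530 * Pf (- x).
Proof. unfold cubic32, Pf; field. Qed.

Lemma derive_P y : derivable_pt_lim Pf y (P1f y).
Proof. apply is_derive_Reals; unfold Pf, P1f; auto_derive; [exact I | field]. Qed.
Lemma derive_P1 y : derivable_pt_lim P1f y (P2f y).
Proof. apply is_derive_Reals; unfold P1f, P2f; auto_derive; [exact I | field]. Qed.
Lemma derive_P2 y : derivable_pt_lim P2f y P3f.
Proof. apply is_derive_Reals; unfold P2f, P3f; auto_derive; [exact I | field]. Qed.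
Lemma derive_Q y : derivable_pt_lim Qf y (Q1f y).
Proof. apply is_derive_Reals; unfold Qf, Q1f; auto_derive; [exact I | field]. Qed.
Lemma derive_Q1 y : derivable_pt_lim Q1f y (Q2f y).
Proof. apply is_derive_Reals; unfold Q1f, Q2f; auto_derive; [exact I | field]. Qed.
Lemma derive_Q2 y : derivable_pt_lim Q2f y Q3f.
Proof. apply is_derive_Reals; unfold Q2f, Q3f; auto_derive; [exact I | field]. Qed.

(** P' has negative discriminant, so P is strictly increasing and has a
    single real root. *)
Lemma P1_pos y : 0 < P1f y.
Proof.
  set (s := 2*(2289/34970) / (2*(3*(1246/384649)))).
  assert (E : P1f y = 3*(1246/384649) * (y + s)^2
                      + (119/269 - (2*(2289/34970))^2/(4*(3*(1246/384649)))))
    by (unfold P1f, s; field).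
  pose proof (pow2_ge_0 (y + s)); rewrite E; lra.
Qed.

Lemma P_increasing u v : u < v -> Pf u < Pf v.
Proof.
  intros Huv.
  apply (incr_function Pf m_infty p_infty P1f); try easy.
  - intros y _ _; apply is_derive_Reals, derive_P.
  - intros y _ _; apply P1_pos.
Qed.

Lemma P_ge_1 y : 0 <= y -> 1 <= Pf y.
Proof. intros; unfold Pf; nra. Qed.

Lemma Q_ge_1 y : y <= 0 -> 1 <= Qf y.
Proof. intros; unfold Qf; nra. Qed.

Lemma Q_pos y : y < 1 -> 0 < Qf y.
Proof. intros; unfold Qf; destruct (Rle_dec y 0); nra. Qed.

Lemma Q_root_ex : exists p, Qf p = 0 /\ 3.714171442588 <= p <= 3.714171442589.
Proof.
  assert (C : continuity (fun y => - Qf y)) by (unfold Qf; reg).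
  destruct (IVT (fun y => - Qf y) 3.714171442588 3.714171442589 C) as [p [Hp Hv]];
    unfold Qf in *; try lra.
  exists p; split; [lra | exact Hp].
Qed.

Lemma cubic32_root_ex :
  exists x0, cubic32 x0 = 0 /\ 6.778307398562 <= x0 <= 6.778307398563.
Proof.
  assert (C : continuity cubic32) by (unfold cubic32; reg).
  destruct (IVT cubic32 6.778307398562 6.778307398563 C) as [x0 [Hx Hv]];
    unfold cubic32 in *; try lra.
  exists x0; split; [exact Hv | exact Hx].
Qed.

(** The cubic has no other real root, since P is injective. *)
Lemma cubic32_root_unique x y : cubic32 x = 0 -> cubic32 y = 0 -> x = y.
Proof.
  rewrite !cubic32_eq; intros Hx Hy.
  destruct (Rtotal_order x y) as [H | [H | H]]; auto;
    [pose proof (P_increasing (-y) (-x)) | pose proof (P_increasing (-x) (-y))]; lra.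
Qed.

Lemma derive_val (f : R -> R) (y l l' : R) :
  derivable_pt_lim f y l -> l = l' -> derivable_pt_lim f y l'.
Proof. now intros H <-. Qed.

Lemma nonneg_of_nonneg_derive (f f' : R -> R) (a b : R) :
  (forall c, a <= c <= b -> derivable_pt_lim f c (f' c)) ->
  (forall c, a <= c <= b -> 0 <= f' c) -> 0 <= f a ->
  forall x, a <= x <= b -> 0 <= f x.
Proof.
  intros Hd Hpos Ha x Hx.
  destruct (Req_dec a x) as [<- | Hne]; [exact Ha |].
  destruct (MVT_cor2 f f' a x) as [c [Hc1 Hc2]]; [lra | intros; apply Hd; lra |].
  assert (0 <= f' c) by (apply Hpos; lra).
  nra.
Qed.

Lemma derive_of_zero (f g : R -> R) (a b : R) :
  (forall y, a < y < b -> f y = 0) ->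
  (forall y, a < y < b -> derivable_pt_lim f y (g y)) ->
  forall y, a < y < b -> g y = 0.
Proof.
  intros Hf Hd y Hy.
  apply (uniqueness_limite (fun _ => 0) y); [| apply derivable_pt_lim_const].
  apply (derivable_pt_lim_locally_ext f _ y a b); auto.
Qed.

Lemma remainder_step (g g' : R -> R) (M : R) (n : nat) :
  0 <= M -> g 0 = 0 -> (forall c, derivable_pt_lim g c (g' c)) ->
  (forall c, Rabs c <= 1 -> Rabs (g' c) <= M * Rabs c ^ n) ->
  forall z, Rabs z <= 1 -> Rabs (g z) <= M * Rabs z ^ S n.
Proof.
  intros HM H0 Hd Hb z Hz.
  destruct (MVT_abs g g' 0 z) as [c [E Hc]]; [intros; apply Hd |].
  rewrite H0, !Rminus_0_r in E; rewrite E.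
  assert (Hcz : Rabs c <= Rabs z).
  { unfold Rmin, Rmax in Hc; unfold Rabs.
    destruct (Rle_dec 0 z), (Rcase_abs c), (Rcase_abs z); lra. }
  assert (Hn : Rabs c ^ n <= Rabs z ^ n) by (apply pow_incr; split; [apply Rabs_pos | exact Hcz]).
  assert (Hg' : Rabs (g' c) <= M * Rabs z ^ n).
  { apply Rle_trans with (M * Rabs c ^ n); [apply Hb; lra | apply Rmult_le_compat_l; lra]. }
  replace (M * Rabs z ^ S n) with (M * Rabs z ^ n * Rabs z) by (simpl; ring).
  apply Rmult_le_compat_r; [apply Rabs_pos | exact Hg'].
Qed.

Lemma exp_remainder3 z : Rabs z <= 1 -> Rabs (exp z - 1 - z - z^2/2) <= 3 * Rabs z ^ 3.
Proof.
  assert (R1 : forall z, Rabs z <= 1 -> Rabs (exp z - 1) <= 3 * Rabs z ^ 1).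
  { apply (remainder_step (fun z => exp z - 1) exp 3 0); [lra | | |].
    - rewrite exp_0; ring.
    - intro c; apply is_derive_Reals; auto_derive; [exact I | ring].
    - intros c Hc; rewrite Rabs_pos_eq by (left; apply exp_pos); simpl.
      assert (c <= 1) by (apply Rabs_le_between in Hc; lra).
      assert (exp c <= exp 1) by (destruct (Req_dec c 1) as [-> | Hne];
                                  [lra | left; apply exp_increasing; lra]).
      pose proof exp_le_3; lra. }
  assert (R2 : forall z, Rabs z <= 1 -> Rabs (exp z - 1 - z) <= 3 * Rabs z ^ 2).
  { apply (remainder_step (fun z => exp z - 1 - z) (fun z => exp z - 1) 3 1); auto; [lra | | ].
    - rewrite exp_0; ring.
    - intro c; apply is_derive_Reals; auto_derive; [exact I | ring]. }
  apply (remainder_step (fun z => exp z - 1 - z - z^2/2) (fun z => exp z - 1 - z) 3 2); auto; [lra | |].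
  - rewrite exp_0; field.
  - intro c; apply is_derive_Reals; auto_derive; [exact I | field].
Qed.

Lemma mult_enclosure (a1 a2 b1 b2 x y : R) : 0 <= a1 -> a1 <= x <= a2 -> 0 <= b1 -> b1 <= y <= b2 ->
  a1 * b1 <= x * y <= a2 * b2.
Proof. intros; split; apply Rmult_le_compat; lra. Qed.

Lemma div_enclosure (q q1 q2 d r1 r2 : R) :
  0 < q1 -> q1 <= q <= q2 -> r1 <= q * d <= r2 -> 0 <= r1 -> r1 / q2 <= d <= r2 / q1.
Proof.
  intros Hq1 Hq Hd Hr.
  assert (0 <= d) by nra.
  split; [apply Rle_div_l | apply Rle_div_r]; nra.
Qed.

Lemma concave_quadratic_nonneg (a2 a1 a0 a b y : R) : a2 <= 0 -> a < b ->
  0 <= a2 * a^2 + a1 * a + a0 -> 0 <= a2 * b^2 + a1 * b + a0 -> a <= y <= b ->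
  0 <= a2 * y^2 + a1 * y + a0.
Proof.
  intros H2 Hab Ha Hb Hy.
  assert (E : a2 * y^2 + a1 * y + a0 =
    ((b - y) * (a2 * a^2 + a1 * a + a0) + (y - a) * (a2 * b^2 + a1 * b + a0)) / (b - a)
    - a2 * (y - a) * (b - y)) by (field; lra).
  rewrite E.
  assert (0 <= ((b - y) * (a2 * a^2 + a1 * a + a0) + (y - a) * (a2 * b^2 + a1 * b + a0)) / (b - a))
    by (apply Rdiv_le_0_compat; [apply Rplus_le_le_0_compat; apply Rmult_le_pos |]; lra).
  assert (0 <= (y - a) * (b - y)) by nra.
  nra.
Qed.

Lemma geometric_domination (K A2 theta s rho : R) (n : nat) :
  0 <= K -> 0 <= s -> 0 <= rho -> 0 <= theta <= 1 -> s <= theta * rho ->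
  K * theta ^ 7 <= A2 -> (7 <= n)%nat -> K * s ^ n <= A2 * rho ^ n.
Proof.
  intros HK Hs Hrho Ht Hsr HA Hn.
  assert (Hpow : s ^ n <= theta ^ 7 * rho ^ n).
  { apply Rle_trans with ((theta * rho) ^ n); [apply pow_incr; lra |].
    rewrite Rpow_mult_distr; apply Rmult_le_compat_r; [apply pow_le; lra |].
    replace n with (7 + (n - 7))%nat by lia; rewrite pow_add.
    assert (theta ^ (n - 7) <= 1) by (rewrite <- (pow1 (n - 7)); apply pow_incr; lra).
    pose proof (pow_le theta 7 (proj1 Ht)); nra. }
  pose proof (pow_le rho n Hrho).
  apply Rle_trans with (K * (theta ^ 7 * rho ^ n)); [apply Rmult_le_compat_l; lra | nra].
Qed.

(** ** Derivatives of complex-valued functions of a real variable *)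

Definition is_cderive (u : R -> C) (y : R) (l : C) : Prop :=
  derivable_pt_lim (fun t => Re (u t)) y (Re l) /\
  derivable_pt_lim (fun t => Im (u t)) y (Im l).

Lemma is_cderive_val (u : R -> C) (y : R) (l l' : C) :
  is_cderive u y l -> l = l' -> is_cderive u y l'.
Proof. now intros H <-. Qed.

Lemma is_cderive_const (c : C) (y : R) : is_cderive (fun _ => c) y 0%C.
Proof. split; apply derivable_pt_lim_const. Qed.

Lemma is_cderive_plus (u v : R -> C) (y : R) (u' v' : C) :
  is_cderive u y u' -> is_cderive v y v' ->
  is_cderive (fun t => u t + v t)%C y (u' + v')%C.
Proof.
  intros [Hur Hui] [Hvr Hvi]; split; simpl;
    now apply (derivable_pt_lim_plus (fun t => _ (u t)) (fun t => _ (v t))).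
Qed.

Lemma is_cderive_mult (u v : R -> C) (y : R) (u' v' : C) :
  is_cderive u y u' -> is_cderive v y v' ->
  is_cderive (fun t => u t * v t)%C y (u' * v y + u y * v')%C.
Proof.
  intros [Hur Hui] [Hvr Hvi]; split; rewrite ?re_mult, ?im_mult; eapply derive_val.
  - apply derivable_pt_lim_minus; apply derivable_pt_lim_mult; eassumption.
  - unfold Re, Im; simpl; ring.
  - apply derivable_pt_lim_plus; apply derivable_pt_lim_mult; eassumption.
  - unfold Re, Im; simpl; ring.
Qed.

Definition kern (c : C) (y : R) : C := / (c - RtoC y).

Lemma kern_eq (cr ci y : R) : kern (cr, ci) y =
  ((cr - y) / ((cr - y) ^ 2 + ci ^ 2), - ci / ((cr - y) ^ 2 + ci ^ 2)).
Proof. unfold kern, Cinv, Cminus, Cplus, Copp, RtoC; simpl; f_equal; f_equal; ring. Qed.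

Lemma is_cderive_kern (c : C) (y : R) : c <> RtoC y -> is_cderive (kern c) y (kern c y ^ 2)%C.
Proof.
  intros Hc; destruct c as [cr ci].
  assert (Hq : (cr - y) ^ 2 + ci ^ 2 <> 0).
  { intro H; apply Hc; rewrite <- !Rsqr_pow2 in H.
    apply Rplus_sqr_eq_0 in H as [E1 E2]; unfold RtoC; f_equal; lra. }
  assert (Hk : forall t, Re (kern (cr, ci) t) = (cr - t) / ((cr - t) ^ 2 + ci ^ 2) /\
                         Im (kern (cr, ci) t) = - ci / ((cr - t) ^ 2 + ci ^ 2))
    by (intro t; rewrite kern_eq; split; reflexivity).
  rewrite Cpow_S, Cpow_1_r; split.
  - apply (derivable_pt_lim_ext (fun t => (cr - t) / ((cr - t) ^ 2 + ci ^ 2))).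
    { intro t; symmetry; apply Hk. }
    rewrite re_mult, (proj1 (Hk y)), (proj2 (Hk y)).
    apply is_derive_Reals; auto_derive; [exact Hq | field; exact Hq].
  - apply (derivable_pt_lim_ext (fun t => - ci / ((cr - t) ^ 2 + ci ^ 2))).
    { intro t; symmetry; apply Hk. }
    rewrite im_mult, (proj1 (Hk y)), (proj2 (Hk y)).
    apply is_derive_Reals; auto_derive; [exact Hq | field; exact Hq].
Qed.

Lemma is_cderive_kern_pow (c : C) (y : R) (n : nat) : c <> RtoC y ->
  is_cderive (fun t => kern c t ^ n)%C y (INR n * kern c y ^ S n)%C.
Proof.
  intros Hc; induction n as [|n IH].
  - eapply is_cderive_val; [exact (is_cderive_const 1 y) | simpl; ring].
  - eapply is_cderive_val.
    { exact (is_cderive_mult (kern c) _ y _ _ (is_cderive_kern c y Hc) IH). }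
    rewrite S_INR, RtoC_plus; simpl; ring.
Qed.

Lemma kern_real (p y : R) (n : nat) : p <> y -> (kern (RtoC p) y ^ n)%C = RtoC (/ (p - y) ^ n).
Proof.
  intros Hpy; unfold kern.
  rewrite <- RtoC_minus, <- RtoC_inv by lra.
  rewrite <- RtoC_pow, pow_inv; reflexivity.
Qed.

(** ** Partial fractions of ψ = P/Q around the real root p of Q *)

Section PartialFractions.

Variable p : R.
Hypothesis p_root : Qf p = 0.
Hypothesis p_encl : 3.714171442588 <= p <= 3.714171442589.

(** Q(y) = 4/327 (p - y) |z - y|² with z = zre + i zim the complex roots. *)
Definition zre : R := (654/65 - p) / 2.
Definition zim2 : R := 327 / (4 * p) - zre ^ 2.
Definition zim : R := sqrt zim2.
Definition zroot : C := (zre, zim).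
Definition quad (y : R) : R := (y - zre) ^ 2 + zim2.

(** ψ = c0 + A/(p - y) + (m1 y + m0)/quad y: c0 is the quotient of P by Q,
    A the residue at p, and rem1 + rem2 y the remainder of
    P - c0 Q - 4/327 A quad, which vanishes at p. *)
Definition c0 : R := - (1246/384649) * (327/4).
Definition resA : R := Pf p / (4/327 * quad p).
Definition rem2 : R := 2289/34970 - c0 * (8/65) - 4/327 * resA.
Definition rem1 : R := 119/269 + c0 * (150/269) + 8/327 * resA * zre.
Definition m1 : R := - (327/4) * rem2.
Definition m0 : R := - (327/4) * (rem1 + rem2 * p).
(** The complex residue: Re(resB/(z - y)) = (m1 y + m0)/quad y. *)
Definition resB : C := (- m1, (m0 + m1 * zre) / zim).

Lemma zre_encl : 3.17368350 <= zre <= 3.17368351.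
Proof. unfold zre; lra. Qed.

Lemma zim2_encl : 11.9380255 <= zim2 <= 11.9380256.
Proof.
  pose proof zre_encl.
  assert (E : zim2 = (327/4 - zre^2 * p) / p) by (unfold zim2; field; lra).
  assert (3.17368350^2 <= zre^2 <= 3.17368351^2) by (split; apply pow_incr; lra).
  assert (44.33987346 <= 327/4 - zre^2 * p <= 44.33987371) by (split; nra).
  rewrite E; split; [apply (Rle_div_r 11.9380255) | apply (Rle_div_l _ 11.9380256)]; nra.
Qed.

Lemma zim_pos : 0 < zim.
Proof. unfold zim; apply sqrt_lt_R0; pose proof zim2_encl; lra. Qed.

Lemma zim_sq : zim ^ 2 = zim2.
Proof. unfold zim; rewrite <- Rsqr_pow2; apply Rsqr_sqrt; pose proof zim2_encl; lra. Qed.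

Lemma quad_pos y : 0 < quad y.
Proof. unfold quad; pose proof zim2_encl; pose proof (pow2_ge_0 (y - zre)); lra. Qed.

Lemma quad_p_encl : 12.2301527 <= quad p <= 12.2301529.
Proof.
  pose proof zim2_encl; unfold quad.
  assert (0.5404879331 <= p - zre <= 0.5404879332) by (unfold zre; lra).
  assert (0.5404879331^2 <= (p - zre)^2 <= 0.5404879332^2) by (split; apply pow_incr; lra).
  lra.
Qed.

Lemma P_p_encl : 3.71201734 <= Pf p <= 3.71201735.
Proof.
  unfold Pf.
  assert (3.714171442588^2 <= p^2 <= 3.714171442589^2) by (split; apply pow_incr; lra).
  assert (3.714171442588^3 <= p^3 <= 3.714171442589^3) by (split; apply pow_incr; lra).
  lra.
Qed.

Lemma resA_encl : 24.812234 <= resA <= 24.8122347.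
Proof.
  pose proof quad_p_encl; pose proof P_p_encl; unfold resA.
  split; [apply (Rle_div_r 24.812234) | apply (Rle_div_l _ 24.8122347)]; nra.
Qed.

Lemma m1_encl : 16.7967595 <= m1 <= 16.7967603.
Proof. pose proof resA_encl; unfold m1, rem2, c0; lra. Qed.

Lemma m0_encl : -119.1991275 <= m0 <= -119.1991198.
Proof.
  pose proof resA_encl; pose proof zre_encl.
  assert (-0.2054649577 <= rem2 <= -0.2054649491) by (unfold rem2, c0; lra).
  assert (24.812234*3.17368350 <= resA*zre <= 24.8122347*3.17368351)
    by (apply mult_enclosure; lra).
  assert (2.2212252876 <= rem1 <= 2.2212253481) by (unfold rem1, c0; lra).
  assert (0.2054649491*3.714171442588 <= (-rem2)*p <= 0.2054649577*3.714171442589)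
    by (apply mult_enclosure; lra).
  unfold m0; lra.
Qed.

Definition theta : R := 9921/10000.

Lemma pole_ratio y : -6.778307398563 <= y <= 0 -> (p - y)^2 <= theta * quad y.
Proof.
  intros Hy; pose proof zre_encl as Hzre; pose proof zim2_encl as Hzim2.
  assert (Hform : forall t, theta * quad t - (p - t)^2 =
    (theta - 1) * t^2 + (2*p - 2*theta*zre) * t + (theta * (zre^2 + zim2) - p^2))
    by (intro; unfold quad; ring).
  assert (Ha : 0 <= theta * quad (-6.778307398563) - (p - -6.778307398563)^2).
  { assert (9.95199090 <= zre + 6.778307398563 <= 9.95199091) by (unfold zre; lra).
    assert (9.95199090^2 <= (zre + 6.778307398563)^2) by (apply pow_incr; lra).
    assert (10.49247884 <= p + 6.778307398563 <= 10.49247885) by lra.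
    assert ((p + 6.778307398563)^2 <= 10.49247885^2) by (apply pow_incr; lra).
    unfold quad; replace (-6.778307398563 - zre) with (- (zre + 6.778307398563)) by lra.
    replace (p - -6.778307398563) with (p + 6.778307398563) by lra.
    rewrite <- Rsqr_pow2, <- Rsqr_neg, Rsqr_pow2; unfold theta; lra. }
  assert (Hb : 0 <= theta * quad 0 - (p - 0)^2).
  { assert (E : quad 0 = 327 / (4 * p)) by (unfold quad, zim2; ring).
    assert (22 <= 327 / (4 * p)) by (apply (Rle_div_r 22); lra).
    assert ((p - 0)^2 <= 3.8^2) by (apply pow_incr; lra).
    rewrite E; unfold theta; lra. }
  rewrite Hform in Ha, Hb.
  assert (Hy' := concave_quadratic_nonneg (theta - 1) (2*p - 2*theta*zre)
                   (theta * (zre^2 + zim2) - p^2) (-6.778307398563) 0 y).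
  specialize (Hy' ltac:(unfold theta; lra) ltac:(lra) Ha Hb Hy).
  rewrite <- Hform in Hy'; lra.
Qed.

Lemma tail_constant : Cmod resB ^ 2 * theta ^ 7 <= resA ^ 2.
Proof.
  pose proof m1_encl; pose proof m0_encl; pose proof zre_encl; pose proof zim2_encl;
    pose proof resA_encl; pose proof zim_pos.
  assert (E : Cmod resB ^ 2 = m1^2 + (m0 + m1*zre)^2 / zim2)
    by (rewrite Cmod2_alt, <- zim_sq; unfold resB, Re, Im; simpl; field; lra).
  assert (16.7967595*3.17368350 <= m1*zre <= 16.7967603*3.17368351)
    by (apply mult_enclosure; lra).
  assert (m1^2 <= 16.7967603^2) by (apply pow_incr; lra).
  assert ((m0 + m1*zre)^2 <= 65.891530^2)
    by (replace ((m0 + m1*zre)^2) with ((-(m0 + m1*zre))^2) by ring; apply pow_incr; lra).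
  assert ((m0 + m1*zre)^2 / zim2 <= 363.69) by (apply Rle_div_l; lra).
  assert (0 <= theta^7 <= 0.946) by (unfold theta; lra).
  assert (24.812234^2 <= resA^2) by (apply pow_incr; lra).
  assert (0 <= (m0 + m1*zre)^2 / zim2) by (apply Rdiv_le_0_compat; [apply pow2_ge_0 | lra]).
  assert ((m1^2 + (m0 + m1*zre)^2 / zim2) * theta^7 <= (16.7967603^2 + 363.69) * 0.946)
    by (apply Rmult_le_compat; pose proof (pow2_ge_0 m1); lra).
  rewrite E; lra.
Qed.

Lemma Q_factor y : Qf y = 4/327 * (p - y) * quad y.
Proof.
  assert (E : Qf y - 4/327 * (p - y) * quad y = y * Qf p / p)
    by (unfold Qf, quad, zim2, zre; field; lra).
  rewrite p_root in E; lra.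
Qed.

(** P - c0 Q - 4/327 A quad vanishes at p, so it is (p - y) times a linear factor. *)
Lemma P_remainder y : Pf y - c0 * Qf y - 4/327 * resA * quad y = 4/327 * (p - y) * (m1 * y + m0).
Proof.
  assert (HA : 4/327 * resA * quad p = Pf p)
    by (unfold resA; field; pose proof (quad_pos p); lra).
  assert (E : Pf y - c0 * Qf y - 4/327 * resA * quad y - 4/327 * (p - y) * (m1 * y + m0)
              = Pf p - c0 * Qf p - 4/327 * resA * quad p)
    by (unfold m1, m0, rem1, rem2, quad, c0, Pf, Qf; field).
  rewrite p_root, HA in E; lra.
Qed.

Lemma partial_fractions y : y <> p ->
  Pf y / Qf y = c0 + resA / (p - y) + (m1 * y + m0) / quad y.
Proof.
  intros Hy; pose proof (P_remainder y); pose proof (quad_pos y).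
  assert (E : Pf y = c0 * Qf y + 4/327 * resA * quad y + 4/327 * (p - y) * (m1 * y + m0)) by lra.
  rewrite E, Q_factor; field; split; [lra | intro; apply Hy; lra].
Qed.

Definition pf_sum (n : nat) (y : R) : C :=
  (RtoC resA * kern (RtoC p) y ^ n + resB * kern zroot y ^ n)%C.

Lemma zroot_not_real y : zroot <> RtoC y.
Proof. intro E; injection E; pose proof zim_pos; lra. Qed.

Lemma kern_zroot_eq y : kern zroot y = ((zre - y) / quad y, - zim / quad y).
Proof. unfold zroot, quad; rewrite kern_eq, zim_sq; f_equal; f_equal; ring. Qed.

Lemma Re_pf_sum_1 y : y <> p -> Re (pf_sum 1 y) = resA / (p - y) + (m1 * y + m0) / quad y.
Proof.
  intros Hy; unfold pf_sum.
  rewrite (kern_real p y 1), Cpow_1_r, kern_zroot_eq by lra.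
  pose proof zim_pos; pose proof (quad_pos y).
  unfold resB, Re, Im; simpl; field; repeat split; lra.
Qed.

Lemma is_cderive_pf_sum n y : y <> p -> is_cderive (pf_sum n) y (INR n * pf_sum (S n) y)%C.
Proof.
  intros Hy; eapply is_cderive_val.
  - apply is_cderive_plus; apply (is_cderive_mult (fun _ => _)); try apply is_cderive_const;
      apply is_cderive_kern_pow; [intro E; apply Hy; injection E; lra | apply zroot_not_real].
  - unfold pf_sum; ring.
Qed.

Definition psi_deriv (k : nat) (y : R) : R :=
  (match k with O => c0 | S _ => 0 end) + INR (Factorial.fact k) * Re (pf_sum (S k) y).

Lemma psi_deriv_0 y : y <> p -> psi_deriv 0 y = Pf y / Qf y.
Proof.
  intros Hy; unfold psi_deriv; rewrite Re_pf_sum_1, partial_fractions by exact Hy.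
  simpl; ring.
Qed.

Lemma psi_deriv_S k y : y <> p -> derivable_pt_lim (psi_deriv k) y (psi_deriv (S k) y).
Proof.
  intros Hy; destruct (is_cderive_pf_sum (S k) y Hy) as [HRe _].
  eapply derive_val.
  - apply derivable_pt_lim_plus; [apply derivable_pt_lim_const |].
    apply derivable_pt_lim_scal, HRe.
  - unfold psi_deriv; rewrite re_scal_l, fact_simpl, mult_INR; ring.
Qed.

Lemma kern_zroot_norm y : Cmod (kern zroot y) ^ 2 = / quad y.
Proof.
  pose proof (quad_pos y).
  rewrite Cmod2_alt, kern_zroot_eq; unfold Re, Im; simpl.
  assert (E : (zre - y)^2 + zim^2 = quad y) by (unfold quad; rewrite zim_sq; ring).
  replace (_ + _) with (((zre - y)^2 + zim^2) / quad y ^ 2) by (field; lra).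
  rewrite E; field; lra.
Qed.

Lemma complex_term_bound n y :
  Re (resB * kern zroot y ^ n) ^ 2 <= Cmod resB ^ 2 * (/ quad y) ^ n.
Proof.
  apply Rle_trans with (Cmod (resB * kern zroot y ^ n) ^ 2).
  - rewrite <- pow2_abs; apply pow_incr; split; [apply Rabs_pos | apply re_le_Cmod].
  - rewrite Cmod_mult, Cmod_pow, <- kern_zroot_norm, Rpow_mult_distr, <- !pow_mult, Nat.mul_comm.
    apply Rle_refl.
Qed.

(** For k ≥ 6 the real pole dominates: ψ⁽ᵏ⁾ ≥ 0 on [-6.7784, 0]. *)
Lemma psi_deriv_tail k y : (6 <= k)%nat -> -6.778307398563 <= y <= 0 -> 0 <= psi_deriv k y.
Proof.
  intros Hk Hy.
  destruct k as [|k]; [lia |].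
  set (n := S (S k)).
  pose proof (quad_pos y) as Hq; pose proof resA_encl.
  assert (Hpy : 0 < p - y) by lra.
  set (u := resA * / (p - y) ^ n).
  set (v := Re (resB * kern zroot y ^ n)).
  assert (Hsum : Re (pf_sum n y) = u + v).
  { unfold pf_sum, u, v; rewrite (kern_real p y n) by lra; simpl; ring. }
  assert (Hu : 0 < u)
    by (unfold u; apply Rmult_lt_0_compat; [lra | apply Rinv_0_lt_compat, pow_lt; lra]).
  assert (Hu2 : u ^ 2 = resA ^ 2 * (/ (p - y) ^ 2) ^ n).
  { unfold u; rewrite Rpow_mult_distr, !pow_inv, <- !pow_mult, Nat.mul_comm; reflexivity. }
  assert (Hratio : / quad y <= theta * / (p - y) ^ 2).
  { replace (/ quad y) with ((p - y)^2 / quad y * / (p - y)^2) by (field; lra).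
    apply Rmult_le_compat_r; [left; apply Rinv_0_lt_compat, pow_lt; lra |].
    apply Rle_div_l; [exact Hq | apply pole_ratio, Hy]. }
  assert (Hdom : Cmod resB ^ 2 * (/ quad y) ^ n <= resA ^ 2 * (/ (p - y) ^ 2) ^ n).
  { apply geometric_domination with theta; try (unfold theta, n; lia || lra).
    - apply pow2_ge_0.
    - left; apply Rinv_0_lt_compat, Hq.
    - left; apply Rinv_0_lt_compat, pow_lt, Hpy.
    - exact Hratio.
    - apply tail_constant. }
  assert (Hv := complex_term_bound n y); fold v in Hv.
  assert (Huv : 0 <= u + v) by nra.
  unfold psi_deriv; fold n; rewrite Hsum.
  pose proof (INR_fact_lt_0 (S k)); nra.
Qed.

(** ** Derivatives of order ≤ 5: the Leibniz relations for Q ψ = P *)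

(** On (-8, 1) we have Q ≠ 0, so Q ψ - P and all its derivatives vanish
    there; leibniz k is the k-th derivative of Q ψ - P. *)
Definition leibniz1 (y : R) : R := Qf y * psi_deriv 1 y + Q1f y * psi_deriv 0 y - P1f y.
Definition leibniz2 (y : R) : R :=
  Qf y * psi_deriv 2 y + 2 * Q1f y * psi_deriv 1 y + Q2f y * psi_deriv 0 y - P2f y.
Definition leibniz3 (y : R) : R := Qf y * psi_deriv 3 y + 3 * Q1f y * psi_deriv 2 y
  + 3 * Q2f y * psi_deriv 1 y + Q3f * psi_deriv 0 y - P3f.
Definition leibniz4 (y : R) : R := Qf y * psi_deriv 4 y + 4 * Q1f y * psi_deriv 3 y
  + 6 * Q2f y * psi_deriv 2 y + 4 * Q3f * psi_deriv 1 y.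
Definition leibniz5 (y : R) : R := Qf y * psi_deriv 5 y + 5 * Q1f y * psi_deriv 4 y
  + 10 * Q2f y * psi_deriv 3 y + 10 * Q3f * psi_deriv 2 y.

Ltac derive_leibniz :=
  repeat first [ apply derive_Q | apply derive_Q1 | apply derive_Q2
               | apply derive_P | apply derive_P1 | apply derive_P2
               | apply psi_deriv_S; lra | apply derivable_pt_lim_const
               | apply derivable_pt_lim_minus | apply derivable_pt_lim_plus
               | apply derivable_pt_lim_mult ].

Lemma leibniz1_zero : forall y, -8 < y < 1 -> leibniz1 y = 0.
Proof.
  apply (derive_of_zero (fun y => Qf y * psi_deriv 0 y - Pf y)).
  - intros y Hy; rewrite psi_deriv_0 by lra; field; pose proof (Q_pos y); lra.
  - intros y Hy; eapply derive_val; [derive_leibniz | unfold leibniz1; ring].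
Qed.

Lemma leibniz2_zero : forall y, -8 < y < 1 -> leibniz2 y = 0.
Proof.
  apply (derive_of_zero leibniz1); [exact leibniz1_zero |].
  intros y Hy; unfold leibniz1; eapply derive_val; [derive_leibniz | unfold leibniz2; ring].
Qed.

Lemma leibniz3_zero : forall y, -8 < y < 1 -> leibniz3 y = 0.
Proof.
  apply (derive_of_zero leibniz2); [exact leibniz2_zero |].
  intros y Hy; unfold leibniz2; eapply derive_val; [derive_leibniz | unfold leibniz3; ring].
Qed.

Lemma leibniz4_zero : forall y, -8 < y < 1 -> leibniz4 y = 0.
Proof.
  apply (derive_of_zero leibniz3); [exact leibniz3_zero |].
  intros y Hy; unfold leibniz3; eapply derive_val;
    [derive_leibniz | unfold leibniz4, P3f, Q3f; ring].
Qed.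

Lemma leibniz5_zero : forall y, -8 < y < 1 -> leibniz5 y = 0.
Proof.
  apply (derive_of_zero leibniz4); [exact leibniz4_zero |].
  intros y Hy; unfold leibniz4; eapply derive_val; [derive_leibniz | unfold leibniz5; ring].
Qed.

Variable x0 : R.
Hypothesis x0_root : cubic32 x0 = 0.
Hypothesis x0_encl : 6.778307398562 <= x0 <= 6.778307398563.

Lemma coefficients_at_root :
  Pf (-x0) = 0 /\ 14.244 <= Qf (-x0) <= 14.245 /\ 0.0015116 <= P1f (-x0) <= 0.0015117 /\
  -3.9123 <= Q1f (-x0) <= -3.9121 /\ 0.74364 <= Q2f (-x0) <= 0.74365 /\
  4.5e-7 <= P2f (-x0) * Qf (-x0) - 2 * Q1f (-x0) * P1f (-x0) <= 4.6e-7.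
Proof.
  assert (W2 : 6.778307398562^2 <= x0^2 <= 6.778307398563^2) by (split; apply pow_incr; lra).
  assert (W3 : 6.778307398562^3 <= x0^3 <= 6.778307398563^3) by (split; apply pow_incr; lra).
  split; [rewrite cubic32_eq in x0_root; lra |].
  unfold Qf, P1f, Q1f, Q2f, P2f; repeat split; nra.
Qed.

(** At -x₀, ψ vanishes and the Leibniz relations determine ψ⁽ᵏ⁾(-x₀)
    recursively; all of them are nonnegative for k ≤ 5. *)
Lemma low_order_at_root :
  psi_deriv 0 (-x0) = 0 /\ 0 <= psi_deriv 1 (-x0) /\ 0 <= psi_deriv 2 (-x0) /\
  0 <= psi_deriv 3 (-x0) /\ 0 <= psi_deriv 4 (-x0) /\ 0 <= psi_deriv 5 (-x0).
Proof.
  destruct coefficients_at_root as (HP & BQ & BP1 & BQ1 & BQ2 & BN2).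
  assert (HI : -8 < -x0 < 1) by lra.
  assert (D0 : psi_deriv 0 (-x0) = 0) by (rewrite psi_deriv_0, HP by lra; unfold Rdiv; ring).
  pose proof (leibniz1_zero (-x0) HI) as E1; pose proof (leibniz2_zero (-x0) HI) as E2;
  pose proof (leibniz3_zero (-x0) HI) as E3; pose proof (leibniz4_zero (-x0) HI) as E4;
  pose proof (leibniz5_zero (-x0) HI) as E5.
  unfold leibniz1, leibniz2, leibniz3, leibniz4, leibniz5, P3f, Q3f in *; rewrite D0 in *.
  set (q := Qf (-x0)) in *; set (a1 := Q1f (-x0)) in *; set (a2 := Q2f (-x0)) in *;
  set (b1 := P1f (-x0)) in *; set (b2 := P2f (-x0)) in *;
  set (d1 := psi_deriv 1 (-x0)) in *; set (d2 := psi_deriv 2 (-x0)) in *;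
  set (d3 := psi_deriv 3 (-x0)) in *; set (d4 := psi_deriv 4 (-x0)) in *;
  set (d5 := psi_deriv 5 (-x0)) in *.
  rewrite !Rmult_0_r in *.
  assert (F1 : q * d1 = b1) by lra.
  assert (B1 : 1.0611e-4 <= d1 <= 1.0613e-4).
  { assert (Hdiv := div_enclosure q 14.244 14.245 d1 0.0015116 0.0015117); lra. }
  assert (B2 : 0 <= d2 <= 3e-9).
  { assert (F2 : q * (q * d2) = b2 * q - 2 * a1 * b1).
    { rewrite <- F1.
      replace (q * (q * d2)) with (q * (q * d2 + 2 * a1 * d1 - b2) + b2 * q - 2 * a1 * (q * d1))
        by ring.
      replace (q * d2 + 2 * a1 * d1 - b2) with 0 by lra; ring. }
    assert (Hdiv := div_enclosure q 14.244 14.245 (q * d2) 4.5e-7 4.6e-7).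
    assert (Hdiv' := div_enclosure q 14.244 14.245 d2 (4.5e-7/14.245) (4.6e-7/14.244)); lra. }
  assert (B3 : 1.347e-3 <= d3 <= 1.349e-3).
  { assert (3.9121*0 <= (-a1)*d2 <= 3.9123*3e-9) by (apply mult_enclosure; lra).
    assert (0.74364*1.0611e-4 <= a2*d1 <= 0.74365*1.0613e-4) by (apply mult_enclosure; lra).
    assert (Hdiv := div_enclosure q 14.244 14.245 d3 0.01919 0.01920); lra. }
  assert (B4 : 1.481e-3 <= d4 <= 1.485e-3).
  { assert (3.9121*1.347e-3 <= (-a1)*d3 <= 3.9123*1.349e-3) by (apply mult_enclosure; lra).
    assert (0.74364*0 <= a2*d2 <= 0.74365*3e-9) by (apply mult_enclosure; lra).
    assert (Hdiv := div_enclosure q 14.244 14.245 d4 0.0211095 0.021142); lra. }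
  assert (B5 : 0 <= d5).
  { assert (3.9121*1.481e-3 <= (-a1)*d4 <= 3.9123*1.485e-3) by (apply mult_enclosure; lra).
    assert (0.74364*1.347e-3 <= a2*d3 <= 0.74365*1.349e-3) by (apply mult_enclosure; lra).
    assert (Hdiv := div_enclosure q 14.244 14.245 d5 0 1); lra. }
  repeat split; lra.
Qed.

(** Every derivative of ψ is nonnegative on [-x₀, 0]: for k ≥ 6 by the tail
    estimate, and for k = 5, 4, ..., 0 by integrating from -x₀. *)
Lemma psi_deriv_nonneg k x : -x0 <= x <= 0 -> 0 <= psi_deriv k x.
Proof.
  destruct low_order_at_root as (D0 & D1 & D2 & D3 & D4 & D5).
  assert (Step : forall k, (forall c, -x0 <= c <= 0 -> 0 <= psi_deriv (S k) c) ->
                 0 <= psi_deriv k (-x0) -> forall x, -x0 <= x <= 0 -> 0 <= psi_deriv k x).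
  { intros j Hnext Hj; apply nonneg_of_nonneg_derive with (psi_deriv (S j)); auto.
    intros c Hc; apply psi_deriv_S; lra. }
  assert (P6 : forall j c, (6 <= j)%nat -> -x0 <= c <= 0 -> 0 <= psi_deriv j c)
    by (intros; apply psi_deriv_tail; auto; lra).
  assert (P5 : forall c, -x0 <= c <= 0 -> 0 <= psi_deriv 5 c) by (apply Step; auto).
  assert (P4 : forall c, -x0 <= c <= 0 -> 0 <= psi_deriv 4 c) by (apply Step; auto).
  assert (P3 : forall c, -x0 <= c <= 0 -> 0 <= psi_deriv 3 c) by (apply Step; auto).
  assert (P2 : forall c, -x0 <= c <= 0 -> 0 <= psi_deriv 2 c) by (apply Step; auto).
  assert (P1 : forall c, -x0 <= c <= 0 -> 0 <= psi_deriv 1 c) by (apply Step; auto).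
  assert (P0 : forall c, -x0 <= c <= 0 -> 0 <= psi_deriv 0 c) by (apply Step; auto; lra).
  destruct k as [|[|[|[|[|[|k]]]]]]; auto; apply P6; lia.
Qed.

End PartialFractions.

(** P and Q have no common real root, so the poles of ψ are the roots of Q. *)
Lemma nonpole_iff y : nonpole P32 Q32 y <-> Qf y <> 0.
Proof.
  split.
  - intros (P1 & Q1 & Heq & HQ1) HQ0.
    assert (Hy : 0 <= y) by (destruct (Rle_dec y 0) as [H | H]; [pose proof (Q_ge_1 y H) |]; lra).
    pose proof (P_ge_1 y Hy).
    specialize (Heq y); rewrite peval_P32, peval_Q32, HQ0, Rmult_0_r in Heq.
    apply HQ1, (Rmult_eq_reg_l (Pf y)); lra.
  - intros HQ; exists P32, Q32; split; [intro; ring | now rewrite peval_Q32].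
Qed.

Lemma rat_val_iff y v : Qf y <> 0 -> (rat_val P32 Q32 y v <-> v = Pf y / Qf y).
Proof.
  intros HQ; split.
  - intros (P1 & Q1 & Heq & HQ1 & ->).
    specialize (Heq y); rewrite peval_P32, peval_Q32 in Heq.
    field_simplify_eq; auto; lra.
  - intros ->; exists P32, Q32; rewrite peval_P32, peval_Q32; split; [intro; ring | auto].
Qed.

(** ψ - exp = z³ rem/Q - (exp z - 1 - z - z²/2) with rem a bounded quadratic. *)
Lemma psi32_in_Pi : in_Pi 3 3 2 P32 Q32.
Proof.
  split; [unfold deg_le; simpl; lia |].
  split; [unfold deg_le; simpl; lia |].
  split; [exists 1; split; [left; reflexivity | lra] |].
  exists (1/2), 4; split; [lra |]; split; [lra |].
  intros z Hz.
  assert (Hz' : -1/2 < z < 1/2) by (apply Rabs_def2 in Hz; lra).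
  assert (HQ : 1/2 <= Qf z) by (unfold Qf; nra).
  exists (Pf z / Qf z); split; [apply rat_val_iff; [lra | reflexivity] |].
  set (rem := 376526021659/2199267199155 - 1048/21255 * z + 2/327 * z^2).
  assert (Hrem : 0 <= rem <= 0.23) by (unfold rem; split; nra).
  assert (E : Pf z / Qf z - exp z = z^3 * (rem / Qf z) - (exp z - 1 - z - z^2/2))
    by (unfold rem, Pf; unfold Qf in *; field; lra).
  assert (Hrem_Q : 0 <= rem / Qf z <= 0.46)
    by (split; [apply Rdiv_le_0_compat | apply (Rle_div_l _ 0.46)]; lra).
  pose proof (exp_remainder3 z ltac:(lra)) as Hexp.
  pose proof (pow_le (Rabs z) 3 (Rabs_pos z)).
  rewrite E; eapply Rle_trans; [apply Rabs_triang |].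
  rewrite Rabs_Ropp, Rabs_mult, <- RPow_abs, (Rabs_pos_eq (rem / Qf z)) by lra.
  assert (Rabs z ^ 3 * (rem / Qf z) <= Rabs z ^ 3 * 0.46) by (apply Rmult_le_compat_l; lra).
  lra.
Qed.

Lemma not_abs_monotonic x : Pf x < 0 -> 0 < Qf x -> ~ abs_monotonic_at P32 Q32 x.
Proof.
  intros HP HQ (Hx & d & Hval & _ & Hpos).
  assert (Hd : d O x = Pf x / Qf x) by (apply rat_val_iff, Hval; [lra | exact Hx]).
  specialize (Hpos O); rewrite Hd in Hpos.
  assert (Pf x / Qf x < 0) by (apply Rmult_neg_pos; [exact HP | apply Rinv_0_lt_compat, HQ]).
  lra.
Qed.

Lemma abs_monotonic_on x0 : cubic32 x0 = 0 -> 6.778307398562 <= x0 <= 6.778307398563 ->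
  forall x, -x0 <= x <= 0 -> abs_monotonic_at P32 Q32 x.
Proof.
  intros Hc Hx x Hxi.
  destruct Q_root_ex as (p & Hp & Hpb).
  assert (Hpole : forall y, nonpole P32 Q32 y -> y <> p)
    by (intros y Hy ->; apply nonpole_iff in Hy; auto).
  split; [apply nonpole_iff; pose proof (Q_ge_1 x); lra |].
  exists (psi_deriv p); split; [| split].
  - intros y Hy; apply rat_val_iff; [now apply nonpole_iff |].
    apply psi_deriv_0; auto.
  - intros k y Hy; apply psi_deriv_S; auto.
  - intros k; apply (psi_deriv_nonneg p Hp Hpb x0 Hc Hx); lra.
Qed.

Lemma radius_set_x0 x0 : cubic32 x0 = 0 -> 6.778307398562 <= x0 <= 6.778307398563 ->
  radius_set P32 Q32 x0.
Proof. intros Hc Hx; right; split; [lra | now apply abs_monotonic_on]. Qed.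

Lemma radius_set_le x0 r : cubic32 x0 = 0 -> 0 <= x0 -> radius_set P32 Q32 r -> r <= x0.
Proof.
  intros Hc Hx0 [-> | [Hr Hall]]; [exact Hx0 |].
  destruct (Rle_dec r x0) as [H | H]; [exact H | exfalso].
  rewrite cubic32_eq in Hc.
  apply (not_abs_monotonic (-r)).
  - pose proof (P_increasing (-r) (-x0)); lra.
  - pose proof (Q_ge_1 (-r)); lra.
  - apply Hall; lra.
Qed.

Theorem mainTheorem16 :
  in_Pi 3 3 2 P32 Q32 /\
  (exists x0 : R,
      cubic32 x0 = 0 /\ (forall y : R, cubic32 y = 0 -> x0 <= y) /\
      is_lub (radius_set P32 Q32) x0) /\
  Rmnp_gt 3 3 2 6.
Proof.
  destruct cubic32_root_ex as (x0 & Hc & Hx).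
  pose proof (radius_set_x0 x0 Hc Hx) as Hrad.
  split; [exact psi32_in_Pi |]; split.
  - exists x0; split; [exact Hc |]; split.
    + intros y Hy; rewrite (cubic32_root_unique x0 y Hc Hy); lra.
    + split; [intros r Hr; apply (radius_set_le x0); auto; lra | intros b Hb; exact (Hb x0 Hrad)].
  - exists P32, Q32; split; [exact psi32_in_Pi |].
    exists x0; split; [lra | exact Hrad].
Qed.
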